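(* Consider the outlier-robust estimation problem \[ \min_{\mathbf{x}\in\mathcal{X}\subseteq\mathbb{R}^d}\ \sum_{i=1}^N \rho\big(r(\mathbf{x},\mathbf{z}_i),\beta_i\big)+\psi(\mathbf{x}), \] where $\mathbf{z}_1,\dots,\mathbf{z}_N$ are given measurements, $\beta_i>0$ are given thresholds, $r(\mathbf{x},\mathbf{z}_i)$ is a scalar residual, and $\psi$ is a regularizer. Assume that (a) $r^2(\cdot,\mathbf{z}_i)$ (for each $i$) and $\psi$ are polynomials in $\mathbf{x}$, and (b) $\mathcal{X}=\{\mathbf{x}\in\mathbb{R}^d \mid h_k(\mathbf{x})=0,\ k=1,\dots,l_h,\ g_j(\mathbf{x})\ge 0,\ j=1,\dots,l_g\}$ for finitely many polynomials $h_k,g_j$. If the cost $\rho$ is one of (i) truncated least squares $\rho_{\mathrm{TLS}}(r,\beta_i)=\min\{r^2/\beta_i^2,1\}$; (ii) maximum consensus $\rho_{\mathrm{MC}}(r,\beta_i)=0$ if $|r|\le\beta_i$ and $1$ otherwise; (iii) Geman–McClure $\rho_{\mathrm{GM}}(r,\beta_i)=\dfrac{r^2/\beta_i^2}{1+r^2/\beta_i^2}$; (iv) Tukey's biweight $\rho_{\mathrm{TB}}(r,\beta_i)=\frac{r^2}{\beta_i^2}-\frac{r^4}{\beta_i^4}+\frac{r^6}{3\beta_i^6}$ if $|r|\le\beta_i$ and $\frac13$ otherwise, then the problem can be equivalently recast as a polynomial optimization problem (minimization of a polynomial subject to finitely many polynomial equality and inequality constraints) in $d+N$ variables $(\mathbf{x},\boldsymbol{\theta})\in\mathbb{R}^{d}\times\mathbb{R}^N$,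 where each additional variable $\theta_i$ indicates the confidence of measurement $\mathbf{z}_i$ being an inlier. Moreover, if $\rho$ is one of (v) L1: $\rho_{\mathrm{L1}}(r,\beta_i)=|r|/\beta_i$; (vi) Huber: $\rho_{\mathrm{HB}}(r,\beta_i)=\frac{r^2}{2\beta_i^2}$ if $|r|\le\beta_i$ and $\frac{|r|}{\beta_i}-\frac12$ otherwise; (vii) adaptive: $\rho_{\mathrm{ADT},s}(r,\beta_i)=\frac{|s-2|}{s}\Big(\big(\frac{r^2/\beta_i^2}{|s-2|}+1\big)^{s/2}-1\Big)$ for a given scale parameter $s\in\mathbb{Q}\setminus\{0,2\}$, then the problem can also be equivalently written as a polynomial optimization problem, obtained by adding slack variable(s) for each measurement.
   Context: A polynomial optimization problem (POP) is a problem of the form $\min_{\mathbf{w}\in\mathbb{R}^n}\{p(\mathbf{w}) \mid h_k(\mathbf{w})=0,\ g_j(\mathbf{w})\ge 0\}$ with $p,h_k,g_j$ real polynomials. ''Equivalently recast'' means the optimal values coincide and minimizers of the original problem correspond to the $\mathbf{x}$-components of minimizers of the POP. *)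

(* Real powers with real exponent use Stdlib's Rpower (defined for x > 0). *)
From HB Require Import structures.
From mathcomp Require Import all_boot all_order all_algebra.
From mathcomp Require Import mpoly.
From mathcomp Require Import Rstruct.
From Stdlib Require Rdefinitions Rpower.

Set Implicit Arguments.
Unset Strict Implicit.
Unset Printing Implicit Defensive.

Import Order.TTheory GRing.Theory Num.Theory.
Local Open Scope ring_scope.

Notation R := Rdefinitions.R.

Definition rho_TLS (r beta : R) : R := Num.min (r ^+ 2 / beta ^+ 2) 1.

Definition rho_MC (r beta : R) : R := if `|r| <= beta then 0 else 1.

Definition rho_GM (r beta : R) : R :=
  (r ^+ 2 / beta ^+ 2) / (1 + r ^+ 2 / beta ^+ 2).

Definition rho_TB (r beta : R) : R :=
  if `|r| <= beta then
    r ^+ 2 / beta ^+ 2 - r ^+ 4 / beta ^+ 4 + r ^+ 6 / (3 * beta ^+ 6)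
  else 1 / 3.

Definition rho_L1 (r beta : R) : R := `|r| / beta.

Definition rho_HB (r beta : R) : R :=
  if `|r| <= beta then r ^+ 2 / (2 * beta ^+ 2) else `|r| / beta - 1 / 2.

(* (vii) adaptive, with scale parameter s (a rational number, s <> 0, 2).
   The base ((r^2/beta^2)/|s-2| + 1) is >= 1 > 0, so Rpower is the usual
   real power. *)
Definition rho_ADT (s : rat) (r beta : R) : R :=
  let sR : R := ratr s in
  (`|sR - 2| / sR) *
  (Rpower.Rpower ((r ^+ 2 / beta ^+ 2) / `|sR - 2| + 1) (sR / 2) - 1).

Record POP (n : nat) := mkPOP {
  pop_obj  : {mpoly R[n]};
  pop_eq   : seq {mpoly R[n]};
  pop_ineq : seq {mpoly R[n]}
}.

Definition pop_feasible (n : nat) (P : POP n) (w : 'I_n -> R) : Prop :=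
  (forall h, h \in pop_eq P -> h.@[w] = 0) /\
  (forall g, g \in pop_ineq P -> 0 <= g.@[w]).

Definition concatv (d m : nat) (x : 'I_d -> R) (y : 'I_m -> R)
  : 'I_(d + m) -> R :=
  fun i => match split i with inl j => x j | inr j => y j end.

Definition is_minimizer (T : Type) (X : T -> Prop) (f : T -> R) (x : T)
  : Prop := X x /\ (forall y, X y -> f x <= f y).

(* Equality of the optimal values (infima, in the extended reals,
   with inf of the empty set = +oo):  inf_X f = inf_Y g  iff for every
   real c, some feasible point of the first problem has value < c exactly
   when some feasible point of the second one does. *)
Definition same_optimal_value (T U : Type) (X : T -> Prop) (f : T -> R)
  (Y : U -> Prop) (g : U -> R) : Prop :=
  forall c : R, (exists x, X x /\ f x < c) <-> (exists u, Y u /\ g u < c).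

(* "min_{x in X} f(x) is equivalently recast as the POP P in d + m
   variables (x, y)": optimal values coincide, and x is a minimizer of
   the original problem iff it is the x-component of a minimizer of P. *)
Definition recast_as_POP (d m : nat) (X : ('I_d -> R) -> Prop)
  (f : ('I_d -> R) -> R) (P : POP (d + m)) : Prop :=
  same_optimal_value X f (pop_feasible P) (fun w => (pop_obj P).@[w]) /\
  (forall x : 'I_d -> R,
     is_minimizer X f x <->
     exists y : 'I_m -> R,
       is_minimizer (pop_feasible P) (fun w => (pop_obj P).@[w])
         (concatv x y)).

Definition basic_semialg (d : nat) (hs gs : seq {mpoly R[d]})
  (x : 'I_d -> R) : Prop :=
  (forall h, h \in hs -> h.@[x] = 0) /\ (forall g, g \in gs -> 0 <= g.@[x]).

Definition robust_cost (d N : nat) (Z : Type) (rho : R -> R -> R)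
  (r : ('I_d -> R) -> Z -> R) (z : 'I_N -> Z) (beta : 'I_N -> R)
  (psi : ('I_d -> R) -> R) (x : 'I_d -> R) : R :=
  \sum_(i < N) rho (r x (z i)) (beta i) + psi x.

(* Each cost rho(r, beta) is a function phi of u = r^2 / beta^2, and phi(u) is the
   minimum, over a few auxiliary reals t, of a polynomial in (u, t) subject to
   polynomial constraints: a binary theta (theta^2 = theta, theta (1 - u) >= 0)
   switching between two polynomial branches for TLS, MC and Tukey; theta (1 + u) = 1
   for Geman-McClure; tau^2 = u, tau >= 0 for L1, combined with a two-sided binary
   switch on tau for Huber; and theta^D b^m = b^p, theta >= 0 for the rational power
   b^((p - m)/D) of the adaptive cost, with b = u / |s - 2| + 1.  Substituting the
   polynomial r^2(x, z_i) / beta_i^2 for u and giving each measurement its own slack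
   variables yields a POP whose minimum over the slack variables at fixed x is the
   robust cost of x; this gives the same optimal value and the same minimizers. *)

From mathcomp Require Import all_boot all_order all_algebra.
From mathcomp Require Import mpoly.
From mathcomp Require Import Rstruct.
From mathcomp Require Import ring lra.
From Stdlib Require Import FunctionalExtensionality.
From Stdlib Require Rpower Exp_prop.

Set Implicit Arguments.
Unset Strict Implicit.
Unset Printing Implicit Defensive.

Import Order.TTheory GRing.Theory Num.Theory.
Local Open Scope ring_scope.

Notation Rpower := Rpower.Rpower.

Lemma concatv_lshift d m (x : 'I_d -> R) (y : 'I_m -> R) i :
  concatv x y (lshift m i) = x i.
Proof. by rewrite /concatv -[lshift m i]/(unsplit (inl _ i)) unsplitK. Qed.

Lemma concatv_rshift d m (x : 'I_d -> R) (y : 'I_m -> R) j :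
  concatv x y (rshift d j) = y j.
Proof. by rewrite /concatv -[rshift d j]/(unsplit (inr _ j)) unsplitK. Qed.

Lemma concatv_split d m (w : 'I_(d + m) -> R) :
  w = concatv (w \o lshift m) (w \o @rshift d m).
Proof.
apply: functional_extensionality => i; rewrite /concatv.
by case: splitP => j /= ij; congr w; apply: val_inj.
Qed.

Lemma mevalXn (S : comNzRingType) n (v : 'I_n -> S) (p : {mpoly S[n]}) k :
  (p ^+ k).@[v] = p.@[v] ^+ k.
Proof. exact: rmorphXn. Qed.

Definition mrename (S : comNzRingType) n k (f : 'I_n -> 'I_k) (p : {mpoly S[n]})
  : {mpoly S[k]} := p \mPo [tuple 'X_(f i) | i < n].

Lemma meval_mrename (S : comNzRingType) n k (f : 'I_n -> 'I_k) (p : {mpoly S[n]}) w :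
  (mrename f p).@[w] = p.@[w \o f].
Proof.
by rewrite comp_mpoly_meval; apply: meval_eq => i; rewrite tnth_mktuple mevalXU.
Qed.

Lemma pop_feasibleE n (P : POP n) w :
  pop_feasible P w <->
  all (fun h => h.@[w] == 0) (pop_eq P) && all (fun g => 0 <= g.@[w]) (pop_ineq P).
Proof.
split=> [[he hg]|/andP [/allP he /allP hg]].
  by apply/andP; split; apply/allP => p p_in; [rewrite he | apply: hg].
by split=> p p_in; [apply/eqP/he | apply: hg].
Qed.

Lemma recast_as_POP_fibres d m (X : ('I_d -> R) -> Prop) (f : ('I_d -> R) -> R)
    (P : POP (d + m)) :
  (forall x y, pop_feasible P (concatv x y) ->
     X x /\ f x <= (pop_obj P).@[concatv x y]) ->
  (forall x, X x -> exists y,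
     pop_feasible P (concatv x y) /\ (pop_obj P).@[concatv x y] = f x) ->
  recast_as_POP X f P.
Proof.
move=> lb attained; split=> [c|x]; split.
- case=> x [Xx fx_c]; have [y [Py objE]] := attained x Xx.
  by exists (concatv x y); rewrite objE.
- case=> w [Pw obj_c]; rewrite (concatv_split w) in Pw obj_c.
  have [Xx le_fx] := lb _ _ Pw.
  by exists (w \o lshift m); split => //; apply: le_lt_trans obj_c.
- case=> Xx x_min; have [y [Py objE]] := attained x Xx.
  exists y; split => // w; rewrite objE (concatv_split w) => Pw.
  by have [Xx' le_fx'] := lb _ _ Pw; apply: le_trans (x_min _ Xx') le_fx'.
- case=> y [Py y_min]; have [Xx le_fx] := lb _ _ Py.
  split => // x' Xx'; have [y' [Py' <-]] := attained x' Xx'.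
  exact: le_trans le_fx (y_min _ Py').
Qed.

Lemma idempotent01 (t : R) : t ^+ 2 - t = 0 -> t = 0 \/ t = 1.
Proof.
have -> : t ^+ 2 - t = t * (t - 1) by rewrite mulrBr mulr1 expr2.
by move/eqP; rewrite mulf_eq0 subr_eq0 => /orP [] /eqP; [left | right].
Qed.

Lemma sqrtr_unique (u t : R) : 0 <= t -> t ^+ 2 = u -> t = Num.sqrt u.
Proof. by move=> t0 <-; rewrite sqrtr_sqr ger0_norm. Qed.

Lemma norm_div_sqrt (r b : R) : 0 < b -> `|r| / b = Num.sqrt (r ^+ 2 / b ^+ 2).
Proof. by move=> b0; rewrite -expr_div_n sqrtr_sqr normf_div (gtr0_norm b0). Qed.

Lemma ler_norm_sqr_div (r b : R) : 0 < b -> (`|r| <= b) = (r ^+ 2 / b ^+ 2 <= 1).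
Proof.
move=> b0; rewrite -[b in _ <= b]mul1r -ler_pdivrMr // norm_div_sqrt //.
by rewrite -{1}sqrtr1 ler_sqrt.
Qed.

Lemma Rpower_gt0 (b y : R) : 0 < Rpower b y.
Proof. by apply/RltP; apply: Exp_prop.exp_pos. Qed.

Lemma Rpower_natr (b : R) k : 0 < b -> Rpower b k%:R = b ^+ k.
Proof. by move=> /RltP b0; rewrite -INRE Rpower.Rpower_pow // RpowE. Qed.

Lemma Rpower_nat_ratio (b : R) (p m D : nat) : 0 < b -> (0 < D)%N ->
  Rpower b ((p%:R - m%:R) / D%:R) ^+ D * b ^+ m = b ^+ p.
Proof.
move=> b0 D0; have D0' : (D%:R : R) != 0 by rewrite pnatr_eq0 -lt0n.
rewrite -Rpower_natr ?Rpower_gt0 // Rpower.Rpower_mult RmultE mulfVK //.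
rewrite -RoppE -RplusE Rpower.Rpower_plus Rpower.Rpower_Ropp RmultE RinvE.
by rewrite !Rpower_natr // mulfVK // expf_neq0 // lt0r_neq0.
Qed.

Lemma Rpower_nat_ratioP (b t : R) (p m D : nat) : 0 < b -> 0 <= t -> (0 < D)%N ->
  t ^+ D * b ^+ m = b ^+ p <-> t = Rpower b ((p%:R - m%:R) / D%:R).
Proof.
move=> b0 t0 D0; split=> [|->]; last exact: Rpower_nat_ratio.
rewrite -(Rpower_nat_ratio p m b0 D0) => /(mulIf (expf_neq0 _ (lt0r_neq0 b0)))/eqP.
by rewrite eqrXn2 // ?ltW ?Rpower_gt0 // => /eqP.
Qed.

Lemma ratr_nat_ratio (F : numFieldType) (x : rat) :
  exists p m D : nat, (0 < D)%N /\ ratr x = (p%:R - m%:R) / D%:R :> F.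
Proof.
move: (denq_gt0 x); rewrite /ratr; case: (denq x) => [D|//] D0.
case: (numq x) => [p|k]; first by exists p, 0%N, D; rewrite subr0.
by exists 0%N, k.+1, D; rewrite NegzE mulrNz sub0r.
Qed.

Definition fibre_point k (u : R) (t : 'I_k -> R) : 'I_(1 + k) -> R :=
  concatv (fun=> u) t.

Definition pop_fibre_min k (P : POP (1 + k)) (phi : R -> R) : Prop :=
  (forall u t, 0 <= u -> pop_feasible P (fibre_point u t) ->
     phi u <= (pop_obj P).@[fibre_point u t]) /\
  (forall u, 0 <= u -> exists t,
     pop_feasible P (fibre_point u t) /\ (pop_obj P).@[fibre_point u t] = phi u).

Definition encodes_cost k (P : POP (1 + k)) (rho : R -> R -> R) : Prop :=
  exists2 phi, pop_fibre_min P phi &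
    forall r b, 0 < b -> rho r b = phi (r ^+ 2 / b ^+ 2).

Definition Xu k : {mpoly R[1 + k]} := 'X_(lshift k ord0).
Definition Xt k (j : 'I_k) : {mpoly R[1 + k]} := 'X_(rshift 1 j).

Lemma meval_Xu k u (t : 'I_k -> R) : (Xu k).@[fibre_point u t] = u.
Proof. by rewrite mevalXU /fibre_point concatv_lshift. Qed.

Lemma meval_Xt k j u (t : 'I_k -> R) : (Xt j).@[fibre_point u t] = t j.
Proof. by rewrite mevalXU /fibre_point concatv_rshift. Qed.

Definition fibre_mevalE :=
  (mevalB, mevalD, mevalN, mevalM, mevalC, meval1, mevalXn, meval_Xu, meval_Xt).

Definition comp_fibre n k (u : {mpoly R[n]}) (s : 'I_k -> 'I_n) (p : {mpoly R[1 + k]})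
  : {mpoly R[n]} :=
  p \mPo [tuple match split l with inl _ => u | inr j => 'X_(s j) end | l < 1 + k].

Lemma meval_comp_fibre n k (u : {mpoly R[n]}) (s : 'I_k -> 'I_n) p w :
  (comp_fibre u s p).@[w] = p.@[fibre_point u.@[w] (w \o s)].
Proof.
rewrite comp_mpoly_meval; apply: meval_eq => l.
by rewrite tnth_mktuple /fibre_point /concatv; case: split => // j; rewrite mevalXU.
Qed.

Section Switch.

Variables (A B : {mpoly R[1 + 1]}) (phi : R -> R).
Local Notation th := (Xt (ord0 : 'I_1)).

Definition switch_pop : POP (1 + 1) :=
  mkPOP (th * A + (1 - th) * B) [:: th ^+ 2 - th] [:: th * (1 - Xu 1)].

Hypothesis phi_small : forall u t, 0 <= u -> u <= 1 -> phi u = A.@[fibre_point u t].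
Hypothesis phi_large : forall u t, 1 < u -> phi u = B.@[fibre_point u t].
Hypothesis phi_le_B : forall u t, 0 <= u -> u <= 1 -> phi u <= B.@[fibre_point u t].

Lemma switch_pop_fibre_min : pop_fibre_min switch_pop phi.
Proof.
split=> [u t u0 /pop_feasibleE /= | u u0].
  rewrite !andbT !fibre_mevalE => /andP [/eqP/idempotent01 th01 g].
  case: th01 g => -> g.
    rewrite mul0r add0r subr0 mul1r.
    by case: (lerP u 1) => [/(phi_le_B t u0) | /(phi_large t) ->].
  by rewrite mul1r subrr mul0r addr0 -phi_small // -subr_ge0 -[1 - u]mul1r.
exists (fun=> if u <= 1 then 1 else 0); split; first apply/pop_feasibleE.
  rewrite /= !andbT !fibre_mevalE; case: ifP => [u1 | _].
    by rewrite !mul1r subrr eqxx subr_ge0.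
  by rewrite !mul0r subrr eqxx lexx.
rewrite /= !fibre_mevalE; case: lerP => [u1 | u1].
  by rewrite subrr mul0r addr0 mul1r -phi_small.
by rewrite mul0r add0r subr0 mul1r -phi_large.
Qed.

End Switch.

Lemma encodes_TLS : encodes_cost (switch_pop (Xu 1) 1) rho_TLS.
Proof.
exists (fun u => Num.min u 1) => //; apply: switch_pop_fibre_min => u t.
- by move=> _ u1; rewrite meval_Xu min_l.
- by move=> /ltW u1; rewrite meval1 min_r.
- by move=> _ _; rewrite meval1 ge_min lexx orbT.
Qed.

Lemma encodes_MC : encodes_cost (switch_pop 0 1) rho_MC.
Proof.
exists (fun u => if u <= 1 then 0 else 1).
  apply: switch_pop_fibre_min => u t.
  - by move=> _ ->; rewrite meval0.
  - by rewrite ltNge meval1 => /negbTE ->.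
  - by move=> _ ->; rewrite meval1 ler01.
by move=> r b b0; rewrite /rho_MC ler_norm_sqr_div.
Qed.

Lemma encodes_TB :
  encodes_cost (switch_pop (Xu 1 - Xu 1 ^+ 2 + Xu 1 ^+ 3 * (3^-1)%:MP) (3^-1)%:MP)
    rho_TB.
Proof.
exists (fun u => if u <= 1 then u - u ^+ 2 + u ^+ 3 / 3 else 3^-1).
  apply: switch_pop_fibre_min => u t.
  - by move=> _ ->; rewrite !fibre_mevalE.
  - by rewrite ltNge mevalC => /negbTE ->.
  - move=> u0 u1; rewrite u1 mevalC.
    have : (u - 1) ^+ 3 <= 0.
      by rewrite exprS; apply: mulr_le0_ge0; rewrite ?sqr_ge0 ?subr_le0.
    by move=> ?; lra.
move=> r b b0; rewrite /rho_TB ler_norm_sqr_div //; case: ifP => _.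
  by have := lt0r_neq0 b0; move=> ?; field.
by rewrite div1r.
Qed.

Definition gm_pop : POP (1 + 1) :=
  let th := Xt (ord0 : 'I_1) in mkPOP (1 - th) [:: th * (1 + Xu 1) - 1] [::].

Lemma encodes_GM : encodes_cost gm_pop rho_GM.
Proof.
exists (fun u => u / (1 + u)) => //.
have nz (u : R) : 0 <= u -> 1 + u != 0 by move=> u0; rewrite lt0r_neq0 // ltr_pwDl.
have gm_obj (u : R) : 0 <= u -> 1 - (1 + u)^-1 = u / (1 + u).
  by move=> /nz ?; field.
split=> [u t u0 | u u0].
  move=> /pop_feasibleE /andP [/= + _].
  rewrite andbT !fibre_mevalE subr_eq0 => /eqP th_inv.
  suff -> : t ord0 = (1 + u)^-1 by rewrite gm_obj.
  by apply: (mulIf (nz u u0)); rewrite th_inv mulVf // nz.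
exists (fun=> (1 + u)^-1); split; last by rewrite /gm_pop /= !fibre_mevalE gm_obj.
apply/pop_feasibleE; rewrite /gm_pop /= !fibre_mevalE mulVf ?subrr ?eqxx //; exact: nz.
Qed.

Definition sqrt_pop : POP (1 + 1) :=
  let tau := Xt (ord0 : 'I_1) in mkPOP tau [:: tau ^+ 2 - Xu 1] [:: tau].

Lemma encodes_L1 : encodes_cost sqrt_pop rho_L1.
Proof.
exists Num.sqrt; last exact: norm_div_sqrt.
split=> [u t u0 | u u0].
  move=> /pop_feasibleE /andP [/= + ]; rewrite !andbT !fibre_mevalE subr_eq0.
  by move=> /eqP tau2 tau0; rewrite (sqrtr_unique tau0 tau2).
exists (fun=> Num.sqrt u); split; last by rewrite /sqrt_pop /= !fibre_mevalE.
apply/pop_feasibleE; rewrite /sqrt_pop /= !fibre_mevalE -expr2 sqr_sqrtr //.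
by rewrite subrr eqxx sqrtr_ge0.
Qed.

Definition huber_pop : POP (1 + 2) :=
  let th := Xt (ord0 : 'I_2) in let tau := Xt (ord_max : 'I_2) in
  mkPOP (th * (Xu 2 * (2^-1)%:MP) + (1 - th) * (tau - (2^-1)%:MP))
    [:: th ^+ 2 - th; tau ^+ 2 - Xu 2]
    [:: tau; th * (1 - tau); (1 - th) * (tau - 1)].

Lemma encodes_HB : encodes_cost huber_pop rho_HB.
Proof.
exists (fun u => if u <= 1 then u / 2 else Num.sqrt u - 2^-1); last first.
  move=> r b b0; rewrite /rho_HB ler_norm_sqr_div // norm_div_sqrt // div1r.
  by case: ifP => // _; have := lt0r_neq0 b0; move=> ?; field.
split=> [u t u0 | u u0].
  move=> /pop_feasibleE /andP [/= /and3P [] + + _ /and4P []]; rewrite !fibre_mevalE.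
  move=> /eqP/idempotent01 th01 /eqP/subr0_eq tau2 tau0 g1 g2 _.
  rewrite -(sqrtr_unique tau0 tau2).
  by case: th01 g1 g2 => -> g1 g2; case: (lerP u 1) => u1; nra.
pose t (j : 'I_2) := if j == ord0 then (if u <= 1 then 1 else 0) else Num.sqrt u.
have t0 : t ord0 = (if u <= 1 then 1 else 0) by rewrite /t eqxx.
have t1 : t ord_max = Num.sqrt u by [].
have s0 := sqrtr_ge0 u; have s2 : Num.sqrt u ^+ 2 = u := sqr_sqrtr u0.
exists t; split; [apply/pop_feasibleE|]; rewrite /huber_pop /= !fibre_mevalE t0 t1;
  case: (lerP u 1) => u1.
all: by repeat (apply/andP; split) => //; first [nra | apply/eqP; nra].
Qed.

Definition pow_pop (e c : R) (p m D : nat) : POP (1 + 1) :=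
  let th := Xt (ord0 : 'I_1) in let b := Xu 1 * e%:MP + 1 in
  mkPOP (c%:MP * (th - 1)) [:: th ^+ D * b ^+ m - b ^+ p] [:: th].

Lemma pow_pop_fibre_min (e c : R) (p m D : nat) : 0 <= e -> (0 < D)%N ->
  pop_fibre_min (pow_pop e c p m D)
    (fun u => c * (Rpower (u * e + 1) ((p%:R - m%:R) / D%:R) - 1)).
Proof.
move=> e0 D0; have b0 (u : R) : 0 <= u -> 0 < u * e + 1.
  by move=> u0; rewrite ltr_pwDr ?mulr_ge0.
split=> [u t u0 | u u0].
  move=> /pop_feasibleE /andP [/= + ]; rewrite !andbT !fibre_mevalE subr_eq0.
  by move=> /eqP th_eq th0; rewrite ((Rpower_nat_ratioP p m (b0 u u0) th0 D0).1 th_eq).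
exists (fun=> Rpower (u * e + 1) ((p%:R - m%:R) / D%:R)).
split; last by rewrite /pow_pop /= !fibre_mevalE.
apply/pop_feasibleE; rewrite /pow_pop /= !fibre_mevalE Rpower_nat_ratio ?b0 //.
by rewrite subrr eqxx ltW ?Rpower_gt0.
Qed.

Lemma encodes_ADT s : exists P : POP (1 + 1), encodes_cost P (rho_ADT s).
Proof.
pose a : R := `|ratr s - 2|.
have [p [m [D [D0 sE]]]] := ratr_nat_ratio R (s / 2).
exists (pow_pop a^-1 (a / ratr s) p m D).
exists (fun u => a / ratr s * (Rpower (u * a^-1 + 1) ((p%:R - m%:R) / D%:R) - 1)).
  by apply: pow_pop_fibre_min; rewrite // invr_ge0 normr_ge0.
by move=> r b _; rewrite /rho_ADT -sE fmorph_div /= ratr_nat.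
Qed.

Section RobustPOP.

Variables (d N k : nat) (hs gs : seq {mpoly R[d]}) (psiq : {mpoly R[d]}).
Variables (U : 'I_N -> {mpoly R[d]}) (P : POP (1 + k)).

Local Notation lift := (mrename (lshift (N * k))).
Local Notation inst i :=
  (comp_fibre (lift (U i)) (fun j => rshift d (mxvec_index i j))).

Definition robust_pop : POP (d + N * k) :=
  mkPOP (lift psiq + \sum_(i < N) inst i (pop_obj P))
    (map lift hs ++ [seq inst i e | i <- enum 'I_N, e <- pop_eq P])
    (map lift gs ++ [seq inst i g | i <- enum 'I_N, g <- pop_ineq P]).

Definition meas_slack (y : 'I_(N * k) -> R) i j := y (mxvec_index i j).

Lemma meval_lift (p : {mpoly R[d]}) (x : 'I_d -> R) (y : 'I_(N * k) -> R) :
  (lift p).@[concatv x y] = p.@[x].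
Proof. by rewrite meval_mrename; apply: meval_eq => i; rewrite /= concatv_lshift. Qed.

Lemma meval_inst i (p : {mpoly R[1 + k]}) (x : 'I_d -> R) (y : 'I_(N * k) -> R) :
  (inst i p).@[concatv x y] = p.@[fibre_point (U i).@[x] (meas_slack y i)].
Proof.
rewrite meval_comp_fibre meval_lift; congr (_.@[fibre_point _ _]).
by apply: functional_extensionality => j; rewrite /= concatv_rshift.
Qed.

Lemma forall_mem_robust (a : R -> Prop) (s : seq {mpoly R[d]})
    (t : seq {mpoly R[1 + k]}) (x : 'I_d -> R) (y : 'I_(N * k) -> R) :
  (forall h, h \in map lift s ++ [seq inst i e | i <- enum 'I_N, e <- t] ->
     a h.@[concatv x y]) <->
  (forall h, h \in s -> a h.@[x]) /\
  (forall i e, e \in t -> a e.@[fibre_point (U i).@[x] (meas_slack y i)]).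
Proof.
split=> [H | [Hs Ht] h].
  split=> [h h_s | i e e_t].
    by rewrite -(meval_lift _ _ y); apply: H; rewrite mem_cat map_f.
  rewrite -meval_inst; apply: H.
  by rewrite mem_cat (allpairs_f (fun i e => inst i e)) ?mem_enum ?orbT.
rewrite mem_cat => /orP [/mapP [h' h'_s ->] | /allpairsP [[i e] [_ /= e_t ->]]].
  by rewrite meval_lift; apply: Hs.
by rewrite meval_inst; apply: Ht.
Qed.

Lemma pop_feasible_robust (x : 'I_d -> R) (y : 'I_(N * k) -> R) :
  pop_feasible robust_pop (concatv x y) <->
  basic_semialg hs gs x /\
  forall i, pop_feasible P (fibre_point (U i).@[x] (meas_slack y i)).
Proof.
split=> [[PE PI] | [[he hg] PP]].
  have [he Pe] := (forall_mem_robust (fun r => r = 0) _ _ x y).1 PE.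
  have [hg Pg] := (forall_mem_robust (fun r => 0 <= r) _ _ x y).1 PI.
  by split=> // i; split=> e; [apply: Pe | apply: Pg].
split; [apply/(forall_mem_robust (fun r => r = 0)) |
       apply/(forall_mem_robust (fun r => 0 <= r))];
  by split=> // i; case: (PP i).
Qed.

Lemma robust_pop_objE (x : 'I_d -> R) (y : 'I_(N * k) -> R) :
  (pop_obj robust_pop).@[concatv x y] =
  psiq.@[x] + \sum_(i < N) (pop_obj P).@[fibre_point (U i).@[x] (meas_slack y i)].
Proof.
rewrite /= mevalD meval_lift raddf_sum; congr (_ + _).
by apply: eq_bigr => i _; apply: meval_inst.
Qed.

End RobustPOP.

Lemma recast_robust_cost d N k (Z : Type) (z : 'I_N -> Z) (beta : 'I_N -> R)
    (r : ('I_d -> R) -> Z -> R) (psi : ('I_d -> R) -> R) (hs gs : seq {mpoly R[d]})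
    (P : POP (1 + k)) (rho : R -> R -> R) :
  encodes_cost P rho ->
  (forall i, 0 < beta i) ->
  (forall i, exists q : {mpoly R[d]}, forall x, q.@[x] = r x (z i) ^+ 2) ->
  (exists q : {mpoly R[d]}, forall x, q.@[x] = psi x) ->
  exists Q : POP (d + N * k),
    recast_as_POP (basic_semialg hs gs) (robust_cost rho r z beta psi) Q.
Proof.
case=> phi [phi_lb phi_attained] rhoE beta0 /fin_all_exists [q qE] [psiq psiE].
pose U i := q i * ((beta i ^+ 2)^-1)%:MP.
have UE x i : (U i).@[x] = r x (z i) ^+ 2 / beta i ^+ 2 by rewrite mevalM mevalC qE.
have U0 x i : 0 <= (U i).@[x] by rewrite UE divr_ge0 ?sqr_ge0.
have costE x i : rho (r x (z i)) (beta i) = phi (U i).@[x] by rewrite UE rhoE.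
exists (robust_pop hs gs psiq U P); apply: recast_as_POP_fibres.
  move=> x y /pop_feasible_robust [Xx Py]; split => //.
  rewrite robust_pop_objE /robust_cost psiE addrC lerD2l.
  by apply: ler_sum => i _; rewrite costE; apply: phi_lb.
move=> x Xx.
(* Slack vectors are chosen as row vectors, which form a choiceType. *)
have /fin_all_exists [t tP] i : exists t : 'rV[R]_k,
    pop_feasible P (fibre_point (U i).@[x] (t 0)) /\
    (pop_obj P).@[fibre_point (U i).@[x] (t 0)] = phi (U i).@[x].
  have [t Pt] := phi_attained _ (U0 x i); exists (\row_j t j).
  rewrite (_ : (\row_j t j) 0 = t) //.
  by apply: functional_extensionality => j; rewrite mxE.
pose y := mxvec (\matrix_i t i) 0.
have slackE i : meas_slack y i = t i 0.
  by apply: functional_extensionality => j; rewrite /meas_slack /y mxvecE mxE.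
exists y; split.
  by apply/pop_feasible_robust; split => // i; rewrite slackE; case: (tP i).
rewrite robust_pop_objE /robust_cost psiE addrC; congr (_ + _).
by apply: eq_bigr => i _; rewrite slackE costE; case: (tP i).
Qed.

Theorem proposition1
  (d N : nat) (Z : Type) (z : 'I_N -> Z) (beta : 'I_N -> R)
  (r : ('I_d -> R) -> Z -> R) (psi : ('I_d -> R) -> R)
  (hs gs : seq {mpoly R[d]})
  (hbeta : forall i, 0 < beta i)
  (hr2 : forall i, exists q : {mpoly R[d]},
           forall x : 'I_d -> R, q.@[x] = r x (z i) ^+ 2)
  (hpsi : exists q : {mpoly R[d]}, forall x : 'I_d -> R, q.@[x] = psi x) :
  (forall rho, [\/ rho = rho_TLS, rho = rho_MC, rho = rho_GM | rho = rho_TB] ->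
     exists P : POP (d + N),
       recast_as_POP (basic_semialg hs gs) (robust_cost rho r z beta psi) P)
  /\
  (forall rho, rho = rho_L1 \/ rho = rho_HB ->
     exists k : nat, exists P : POP (d + N * k),
       recast_as_POP (basic_semialg hs gs) (robust_cost rho r z beta psi) P)
  /\
  (forall s : rat, s != 0 -> s != 2 ->
     exists k : nat, exists P : POP (d + N * k),
       recast_as_POP (basic_semialg hs gs)
         (robust_cost (rho_ADT s) r z beta psi) P).
Proof.
have recast k (P : POP (1 + k)) rho : encodes_cost P rho ->
    exists Q : POP (d + N * k),
      recast_as_POP (basic_semialg hs gs) (robust_cost rho r z beta psi) Q.
  by move=> /recast_robust_cost; apply.
split; [|split].
- move=> rho [] ->;
    [move: (recast _ _ _ encodes_TLS) | move: (recast _ _ _ encodes_MC)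
    | move: (recast _ _ _ encodes_GM) | move: (recast _ _ _ encodes_TB)];
  by rewrite muln1.
- move=> rho [] ->; first by exists 1%N; apply: recast encodes_L1.
  by exists 2%N; apply: recast encodes_HB.
- by move=> s _ _; have [P encP] := encodes_ADT s; exists 1%N; apply: recast encP.
Qed.
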